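(* Let $R$ be a Noetherian $p$-torsion free $\mathbb{Z}_{(p)}$-algebra such that $\overline R=R/pR$ is $F$-finite. Then $\mathrm{ht}(R)\le\mathrm{ht}(\overline R)$.
   Context: For a $\mathbb{Z}_{(p)}$-algebra $T$ (including $\mathbb{F}_p$-algebras such as $\overline R$): $W_n(T)$ is the ring of $p$-typical Witt vectors of length $n$ with Teichmüller lift $[\cdot]$, $\Phi_{T,n}:T/pT\to W_n(T)/pW_n(T)$, $a\mapsto[\tilde a^p]$ ($\tilde a$ a lift) is a well-defined ring map, $Q_{T,n}$ is its target as a $T/pT$-module via $\Phi_{T,n}$; $T$ is $n$-quasi-$F$-split if $\Phi_{T,n}$ splits as $T/pT$-modules, and $\mathrm{ht}(T)=\inf\{n\ge1:T\text{ is }n\text{-quasi-}F\text{-split}\}$ ($\infty$ if empty). For an $\mathbb{F}_p$-algebra this is Yobuko's quasi-$F$-split height. *)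

From HB Require Import structures.
From mathcomp Require Import all_boot all_order all_algebra.
From mathcomp Require Import mpoly.
Set Implicit Arguments. Unset Strict Implicit. Unset Printing Implicit Defensive.
Import Order.TTheory GRing.Theory Num.Theory.
Local Open Scope ring_scope.

Section WittPolys.
Variables (p n : nat).
Local Notation P := {mpoly int[n + n]}.

Definition wX (i : nat) : P := if insub i is Some j then 'X_(lshift n j) else 0.
Definition wY (i : nat) : P := if insub i is Some j then 'X_(rshift n j) else 0.

Definition ghost (Z : nat -> P) (k : nat) : P :=
  \sum_(i < k.+1) (p ^ i)%:R * (Z i) ^+ (p ^ (k - i)).

(* coefficientwise exact division of an integer polynomial by d *)
Definition pdivz (Q : P) (d : int) : P :=
  \sum_(m <- msupp Q) ((Q@_m %/ d)%Z *: 'X_[m]).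

(* Given the target ghost components g, the sequence S_0, ..., S_{k-1} *)
(* with  sum_{i<=j} p^i S_i^(p^(j-i)) = g j  for all j, computed by    *)
(* S_j = (g j - sum_{i<j} p^i S_i^(p^(j-i))) / p^j.                    *)
Fixpoint witt_seq (g : nat -> P) (k : nat) : seq P :=
  match k with
  | 0 => [::]
  | k'.+1 =>
      let s := witt_seq g k' in
      rcons s (pdivz (g k' - \sum_(i < k') (p ^ i)%:R * s`_i ^+ (p ^ (k' - i)))
                     (p ^ k')%:Z)
  end.

Definition witt_add_poly (k : nat) : P :=
  (witt_seq (fun j => ghost wX j + ghost wY j) k.+1)`_k.
Definition witt_mul_poly (k : nat) : P :=
  (witt_seq (fun j => ghost wX j * ghost wY j) k.+1)`_k.
End WittPolys.

Section Witt.
Variables (p n : nat) (T : comPzRingType).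

Definition witt := 'I_n -> T.

Definition evalz (v : 'I_(n + n) -> T) (Q : {mpoly int[n + n]}) : T :=
  \sum_(m <- msupp Q) (Q@_m)%:~R * \prod_(i < n + n) v i ^+ m i.

Definition wenv (x y : witt) : 'I_(n + n) -> T :=
  fun j => match split j with inl i => x i | inr i => y i end.

Definition wadd (x y : witt) : witt :=
  fun k => evalz (wenv x y) (witt_add_poly p n k).
Definition wmul (x y : witt) : witt :=
  fun k => evalz (wenv x y) (witt_mul_poly p n k).
Definition wzero : witt := fun _ => 0.
Definition teich (a : T) : witt := fun k => if val k == 0%N then a else 0.
Definition wnatmul (x : witt) (m : nat) : witt := iter m (wadd x) wzero.

Definition congp (a b : T) : Prop := exists c, a - b = p%:R * c.

(* T is n-quasi-F-split: Phi_{T,n} : T/pT -> Q_{T,n} = W_n(T)/pW_n(T), *)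
(* a |-> [a~^p], splits as a map of T/pT-modules.  A T/pT-linear map   *)
(* Q_{T,n} -> T/pT is encoded by a map sigma : W_n(T) -> T on          *)
(* representatives, well defined modulo pW_n(T) and modulo pT.          *)
Definition quasiFsplit : Prop :=
  exists sigma : witt -> T,
    [/\ forall x y, congp (sigma (wadd x y)) (sigma x + sigma y),
        forall x, congp (sigma (wnatmul x p)) 0,
        forall (a : T) x, congp (sigma (wmul (teich (a ^+ p)) x)) (a * sigma x)
      & forall a : T, congp (sigma (teich (a ^+ p))) a].
End Witt.

Definition ht_le (p : nat) (T : comPzRingType) (N : nat) : Prop :=
  exists n, (1 <= n <= N)%N /\ quasiFsplit p n T.

Definition is_ideal (R : comPzRingType) (I : R -> Prop) : Prop :=
  [/\ I 0, forall x y, I x -> I y -> I (x + y) & forall r x, I x -> I (r * x)].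

Definition noetherian (R : comPzRingType) : Prop :=
  forall I : R -> Prop, is_ideal I ->
    exists s : seq R, forall x, I x <->
      exists c : 'I_(size s) -> R, x = \sum_(i < size s) c i * s`_i.

(* Z_(p)-algebra: every prime l <> p is invertible *)
Definition Zp_local_algebra (p : nat) (R : comPzRingType) : Prop :=
  forall l : nat, prime l -> l != p -> exists y : R, l%:R * y = 1.

Definition p_torsion_free (p : nat) (R : comPzRingType) : Prop :=
  forall x : R, p%:R * x = 0 -> x = 0.

(* F-finite F_p-algebra: finite as a module over itself via Frobenius *)
Definition F_finite (p : nat) (S : comPzRingType) : Prop :=
  exists s : seq S, forall x : S,
    exists c : 'I_(size s) -> S, x = \sum_(i < size s) c i ^+ p * s`_i.

From HB Require Import structures.
From mathcomp Require Import all_boot all_order all_algebra.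
From Stdlib Require Import FunctionalExtensionality.
Set Implicit Arguments. Unset Strict Implicit. Unset Printing Implicit Defensive.
Import GRing.Theory.
Local Open Scope ring_scope.

(* A ring map pi : R -> Rbar with kernel pR induces W_n(R)/p -> W_n(Rbar)/p,
   compatible with addition, multiplication and Teichmueller lifts.  Since
   R/pR = Rbar = Rbar/p Rbar, precomposing a splitting of Phi_{Rbar,n} with
   this map and lifting its values along pi gives a splitting of Phi_{R,n}. *)

Section MapWitt.
Variables (p n : nat) (R S : comPzRingType) (f : {rmorphism R -> S}).

Definition map_witt (x : witt n R) : witt n S := fun k => f (x k).

Lemma rmorph_evalz (v : 'I_(n + n) -> R) Q :
  f (evalz v Q) = evalz (fun i => f (v i)) Q.
Proof.
rewrite /evalz rmorph_sum; apply: eq_bigr => m _.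
rewrite rmorphM rmorph_int rmorph_prod; congr (_ * _).
by apply: eq_bigr => i _; rewrite rmorphXn.
Qed.

Lemma map_wenv x y : (fun i => f (wenv x y i)) = wenv (map_witt x) (map_witt y).
Proof. by apply: functional_extensionality => j; rewrite /wenv; case: split. Qed.

Lemma map_wittD x y : map_witt (wadd p x y) = wadd p (map_witt x) (map_witt y).
Proof.
by apply: functional_extensionality => k; rewrite /map_witt /wadd rmorph_evalz map_wenv.
Qed.

Lemma map_wittM x y : map_witt (wmul p x y) = wmul p (map_witt x) (map_witt y).
Proof.
by apply: functional_extensionality => k; rewrite /map_witt /wmul rmorph_evalz map_wenv.
Qed.

Lemma map_witt_teich a : map_witt (teich a) = teich (f a) :> witt n S.
Proof.
apply: functional_extensionality => k.
by rewrite /map_witt /teich; case: eqP; rewrite ?rmorph0.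
Qed.

Lemma map_witt0 : map_witt (@wzero n R) = @wzero n S.
Proof. by apply: functional_extensionality => k; rewrite /map_witt /wzero rmorph0. Qed.

Lemma map_witt_natmul x m : map_witt (wnatmul p x m) = wnatmul p (map_witt x) m.
Proof.
rewrite /wnatmul; elim: m => [|m IHm] /=; first exact: map_witt0.
by rewrite map_wittD IHm.
Qed.

End MapWitt.

Lemma congp_char (p : nat) (S : comPzRingType) (a b : S) :
  p%:R = 0 :> S -> congp p a b -> a = b.
Proof. by move=> p0 [c]; rewrite p0 mul0r => /eqP; rewrite subr_eq0 => /eqP. Qed.

Lemma congp_rmorph (p : nat) (R S : comPzRingType) (f : {rmorphism R -> S}) (a b : R) :
  (forall x, f x = 0 -> exists y, x = p%:R * y) -> f a = f b -> congp p a b.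
Proof. by move=> kerf fab; apply: kerf; rewrite rmorphB fab subrr. Qed.

Lemma quasiFsplit_lift (p n : nat) (R S : comPzRingType) (f : {rmorphism R -> S}) :
  (forall y, exists x, f x = y) ->
  (forall x, f x = 0 -> exists y, x = p%:R * y) ->
  p%:R = 0 :> S ->
  quasiFsplit p n S -> quasiFsplit p n R.
Proof.
move=> f_surj kerf p0 [sigma [sigmaD sigma_p sigma_teichM sigma_teich]].
have f_surjb y : exists x, f x == y by have [x <-] := f_surj y; exists x.
pose lift y := xchoose (f_surjb y).
have liftK y : f (lift y) = y by exact/eqP/(xchooseP (f_surjb y)).
have congf a b : f a = f b -> congp p a b := congp_rmorph kerf.
have eqS a b : congp p a b -> a = b := congp_char p0.
exists (fun x => lift (sigma (map_witt f x))); split.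
- move=> x y; apply: congf; rewrite rmorphD !liftK map_wittD; exact: eqS.
- move=> x; apply: congf; rewrite rmorph0 liftK map_witt_natmul; exact: eqS.
- move=> a x; apply: congf.
  rewrite rmorphM !liftK map_wittM map_witt_teich rmorphXn; exact: eqS.
- move=> a; apply: congf; rewrite liftK map_witt_teich rmorphXn; exact: eqS.
Qed.

Theorem proposition4p5 (p : nat) (R Rbar : comPzRingType)
    (pi : {rmorphism R -> Rbar}) :
  prime p ->
  Zp_local_algebra p R ->
  noetherian R ->
  p_torsion_free p R ->
  (forall y : Rbar, exists x : R, pi x = y) ->
  (forall x : R, pi x = 0 <-> exists y : R, x = p%:R * y) ->
  F_finite p Rbar ->
  forall N : nat, ht_le p Rbar N -> ht_le p R N.
Proof.
move=> _ _ _ _ pi_surj kerpi _ N [n [n_range splitRbar]].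
have p0 : p%:R = 0 :> Rbar.
  by rewrite -(rmorph_nat pi); apply/kerpi; exists 1; rewrite mulr1.
exists n; split => //.
by apply: (quasiFsplit_lift pi_surj _ p0 splitRbar) => x /kerpi.
Qed.
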